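(* Let $H$ be a real Hilbert space with inner product $\langle\cdot,\cdot\rangle$ and norm $|\cdot|$, and let $A_1:D(A_1)\subset H\to H$, $A_2:D(A_2)\subset H\to H$ be densely defined closed linear operators with $A_i=A_i^*$ and $\langle A_iu,u\rangle\ge \omega_i|u|^2$ for all $u\in D(A_i)$ ($i=1,2$), for some $\omega_1,\omega_2>0$. Then the following are equivalent: (a) $D(A_2)\subset D(A_1^{1/2})$ and there is $c>0$ with $|A_1^{1/2}u|\le c|A_2u|$ for all $u\in D(A_2)$; (b) $A_1^{1/2}A_2^{-1}$ is a bounded linear operator on $H$; (c) there is $c>0$ such that $|\langle A_1u,v\rangle|\le c\,|A_2v|\,\langle A_1u,u\rangle^{1/2}$ for all $u\in D(A_1)$ and all $v\in D(A_2)$.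
   Context: $A_1^{1/2}$ denotes the (self-adjoint, positive) square root of $A_1$, with domain $D(A_1^{1/2})$. *)

From HB Require Import structures.
From mathcomp Require Import all_boot all_order all_algebra.
From mathcomp Require Import reals.
Set Implicit Arguments. Unset Strict Implicit. Unset Printing Implicit Defensive.
Import Order.TTheory GRing.Theory Num.Theory.
Local Open Scope ring_scope.

Section Hilbert.
Variables (R : realType) (V : lmodType R) (ip : V -> V -> R).

Definition is_inner_product : Prop :=
  [/\ (forall (a : R) (u v w : V), ip (a *: u + v) w = a * ip u w + ip v w),
      (forall u v, ip u v = ip v u),
      (forall u, 0 <= ip u u) &
      (forall u, ip u u = 0 -> u = 0)].

Definition hnorm (u : V) : R := Num.sqrt (ip u u).

Definition seq_cvg (x : nat -> V) (l : V) : Prop :=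
  forall e : R, 0 < e -> exists N : nat, forall n, (N <= n)%N -> hnorm (x n - l) < e.

Definition seq_cauchy (x : nat -> V) : Prop :=
  forall e : R, 0 < e -> exists N : nat,
    forall m n, (N <= m)%N -> (N <= n)%N -> hnorm (x n - x m) < e.

Definition is_complete : Prop :=
  forall x : nat -> V, seq_cauchy x -> exists l, seq_cvg x l.

Definition is_hilbert : Prop := is_inner_product /\ is_complete.

(* A (possibly unbounded) operator is a pair (D, A): domain D and action A
   (values of A outside D are irrelevant). *)

Definition linear_op (D : V -> Prop) (A : V -> V) : Prop :=
  [/\ D 0,
      (forall (a : R) u v, D u -> D v -> D (a *: u + v)) &
      (forall (a : R) u v, D u -> D v -> A (a *: u + v) = a *: A u + A v)].

Definition dense (D : V -> Prop) : Prop :=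
  forall x (e : R), 0 < e -> exists y, D y /\ hnorm (x - y) < e.

Definition closed_op (D : V -> Prop) (A : V -> V) : Prop :=
  forall (x : nat -> V) u f, (forall n, D (x n)) ->
    seq_cvg x u -> seq_cvg (fun n => A (x n)) f -> D u /\ A u = f.

(* A = A-adjoint: the adjoint domain {v | exists w, forall u in D(A), <Au,v> = <u,w>}
   equals D(A), and the adjoint acts as A on it (the adjoint value at v is the
   unique such w, D being dense). *)
Definition self_adjoint (D : V -> Prop) (A : V -> V) : Prop :=
  (forall v, D v <-> exists w, forall u, D u -> ip (A u) v = ip u w) /\
  (forall u v, D u -> D v -> ip (A u) v = ip u (A v)).

Definition bounded_below (D : V -> Prop) (A : V -> V) (omega : R) : Prop :=
  forall u, D u -> omega * hnorm u ^+ 2 <= ip (A u) u.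

(* (DS, S) is the (positive self-adjoint) square root of (D, A):
   S is a densely defined linear self-adjoint nonnegative operator with S^2 = A,
   including equality of domains D(A) = {u in D(S) | S u in D(S)}. *)
Definition is_sqrt_op (DS : V -> Prop) (S : V -> V) (D : V -> Prop) (A : V -> V) : Prop :=
  [/\ linear_op DS S, dense DS, self_adjoint DS S &
      (forall u, DS u -> 0 <= ip (S u) u)] /\
  ((forall u, D u <-> DS u /\ DS (S u)) /\
   (forall u, D u -> S (S u) = A u)).

(* graph of the composite S A2^{-1}: f |-> S u where u in D(A2), A2 u = f, u in D(S) *)
Definition comp_inv_graph (DS : V -> Prop) (S : V -> V) (D2 : V -> Prop) (A2 : V -> V)
    (f g : V) : Prop :=
  exists u, [/\ D2 u, A2 u = f, DS u & S u = g].

Definition is_bounded_linear_graph (G : V -> V -> Prop) : Prop :=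
  exists T : V -> V,
    [/\ (forall (a : R) f g, T (a *: f + g) = a *: T f + T g),
        (exists c : R, forall f, hnorm (T f) <= c * hnorm f) &
        (forall f g, G f g <-> g = T f)].

End Hilbert.

From HB Require Import structures.
From mathcomp Require Import all_boot all_order all_algebra.
From mathcomp Require Import classical_sets boolp reals.
From mathcomp Require Import ring lra zify.
Set Implicit Arguments.
Unset Strict Implicit.
Unset Printing Implicit Defensive.
Import Order.TTheory GRing.Theory Num.Theory.
Local Open Scope ring_scope.

(* For u in D(A1) and v in D(S), S := A1^{1/2}, one has <A1 u, v> = <S u, S v>, and
   S maps D(A1) onto D(S).  A self-adjoint operator bounded below by a positive constant
   maps its domain bijectively onto H (by the Riesz representation theorem), so (a) <-> (b)
   only says that S A2^{-1} is everywhere defined and bounded.  (a) -> (c) is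
   Cauchy-Schwarz, since |S u| = <A1 u, u>^{1/2}.  Conversely, (c) bounds the functional
   y |-> <S y, v> on D(S) by c |A2 v| |y|, which by self-adjointness of S puts v in D(S)
   with |S v| <= c |A2 v|. *)

Lemma eventually_inv_succ_lt (R : realType) (r : R) : 0 < r ->
  exists N : nat, forall n, (N <= n)%N -> 1 / n.+1%:R < r.
Proof.
move=> r_gt0; have rV_ge0 : 0 <= r^-1 by rewrite invr_ge0 ltW.
have ltN := archimedean.Num.Theory.archi_boundP rV_ge0.
set N := archimedean.Num.Def.archi_bound _ in ltN.
exists N => n leNn.
have leNn' : (N%:R : R) <= n.+1%:R by rewrite ler_nat; lia.
rewrite mul1r -(invrK r) ltf_pV2 ?posrE ?invr_gt0 ?ltr0n //.
exact: lt_le_trans ltN leNn'.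
Qed.

Section InnerProduct.
Variables (R : realType) (V : lmodType R) (ip : V -> V -> R).
Hypothesis ip_inner : is_inner_product ip.

Lemma ipDZl a u v w : ip (a *: u + v) w = a * ip u w + ip v w.
Proof. by case: ip_inner. Qed.
Lemma ipC u v : ip u v = ip v u.
Proof. by case: ip_inner. Qed.
Lemma ip_ge0 u : 0 <= ip u u.
Proof. by case: ip_inner. Qed.
Lemma ip_eq0 u : ip u u = 0 -> u = 0.
Proof. by case: ip_inner => _ _ _; apply. Qed.

Lemma ip0l w : ip 0 w = 0.
Proof.
have := ipDZl 1 0 0 w; rewrite scale1r addr0 mul1r => ip0_twice.
by apply: (addrI (ip 0 w)); rewrite addr0 -ip0_twice.
Qed.
Lemma ipDl u v w : ip (u + v) w = ip u w + ip v w.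
Proof. by rewrite -[u]scale1r ipDZl mul1r scale1r. Qed.
Lemma ipZl a u w : ip (a *: u) w = a * ip u w.
Proof. by rewrite -[a *: u]addr0 ipDZl ip0l addr0. Qed.
Lemma ipBl u v w : ip (u - v) w = ip u w - ip v w.
Proof. by rewrite ipDl -scaleN1r ipZl mulN1r. Qed.
Lemma ip0r w : ip w 0 = 0.
Proof. by rewrite ipC ip0l. Qed.
Lemma ipDr u v w : ip w (u + v) = ip w u + ip w v.
Proof. by rewrite ipC ipDl !(ipC w). Qed.
Lemma ipZr a u w : ip w (a *: u) = a * ip w u.
Proof. by rewrite ipC ipZl ipC. Qed.
Lemma ipBr u v w : ip w (u - v) = ip w u - ip w v.
Proof. by rewrite ipC ipBl !(ipC w). Qed.

Lemma ip_combination a b u v :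
  ip (a *: u + b *: v) (a *: u + b *: v) =
  a ^+ 2 * ip u u + 2 * a * b * ip u v + b ^+ 2 * ip v v.
Proof. by rewrite !ipDl !ipDr !ipZl !ipZr (ipC v u); ring. Qed.

Lemma hnorm_ge0 u : 0 <= hnorm ip u.
Proof. exact: sqrtr_ge0. Qed.
Lemma hnorm_sqr u : hnorm ip u ^+ 2 = ip u u.
Proof. by rewrite sqr_sqrtr ?ip_ge0. Qed.
Lemma hnorm0 : hnorm ip 0 = 0.
Proof. by rewrite /hnorm ip0l sqrtr0. Qed.
Lemma hnorm_eq0 u : hnorm ip u = 0 -> u = 0.
Proof. by move=> u0; apply: ip_eq0; rewrite -hnorm_sqr u0 expr0n. Qed.

Lemma cauchy_schwarz u v : `|ip u v| <= hnorm ip u * hnorm ip v.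
Proof.
have [->|v_neq0] := eqVneq v 0; first by rewrite ip0r hnorm0 mulr0 normr0.
have vv_gt0 : 0 < ip v v.
  by rewrite lt_neqAle ip_ge0 andbT eq_sym; apply: contra_neq v_neq0; apply: ip_eq0.
(* expand <u - t v, u - t v> >= 0 at the minimizing t = <u,v>/<v,v> *)
have := ip_ge0 (1 *: u + (- ip u v / ip v v) *: v); rewrite ip_combination.
have -> : 1 ^+ 2 * ip u u + 2 * 1 * (- ip u v / ip v v) * ip u v
          + (- ip u v / ip v v) ^+ 2 * ip v v = ip u u - ip u v ^+ 2 / ip v v.
  by field; rewrite gt_eqF.
rewrite subr_ge0 ler_pdivrMr // => sq_le.
by rewrite -sqrtrM ?ip_ge0 // -sqrtr_sqr ler_sqrt // mulr_ge0 ?ip_ge0.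
Qed.

Lemma ler_hnormD u v : hnorm ip (u + v) <= hnorm ip u + hnorm ip v.
Proof.
rewrite -(ler_pXn2r (_ : (0 < 2)%N)) ?nnegrE ?addr_ge0 ?hnorm_ge0 //.
rewrite hnorm_sqr -[u]scale1r -[v]scale1r ip_combination !scale1r -!hnorm_sqr.
have := cauchy_schwarz u v; have := ler_norm (ip u v); nra.
Qed.

Lemma hnormBC u v : hnorm ip (u - v) = hnorm ip (v - u).
Proof.
rewrite -opprB /hnorm; congr Num.sqrt.
by rewrite -[- (v - u)]scaleN1r ipZl ipZr mulrA mulN1r opprK mul1r.
Qed.

Lemma hnorm_le_of_dense (P : V -> Prop) (z : V) (C : R) :
  dense ip P -> 0 <= C -> (forall x, P x -> `|ip x z| <= C * hnorm ip x) -> hnorm ip z <= C.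
Proof.
move=> P_dense C_ge0 bound_z.
have z_ge0 := hnorm_ge0 z.
have near e : 0 < e -> hnorm ip z ^+ 2 <= C * hnorm ip z + e.
  move=> e_gt0; have d_gt0 : 0 < e / (hnorm ip z + C + 1) by rewrite divr_gt0 //; lra.
  have [y [Py zy_lt]] := P_dense z _ d_gt0.
  have yz_le : hnorm ip y <= hnorm ip z + hnorm ip (z - y).
    by have := ler_hnormD z (y - z); rewrite addrC subrK hnormBC.
  have split_zz : ip z z = ip (z - y) z + ip y z by rewrite ipBl subrK.
  have := cauchy_schwarz (z - y) z; have := bound_z y Py.
  have := ler_norm (ip (z - y) z); have := ler_norm (ip y z).
  have := hnorm_ge0 (z - y); have := hnorm_ge0 y.
  rewrite ltr_pdivlMr in zy_lt; last by lra.
  rewrite hnorm_sqr split_zz; nra.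
have : hnorm ip z ^+ 2 <= C * hnorm ip z by apply/ler_addgt0Pr.
nra.
Qed.

Lemma orthogonal_dense_eq0 (P : V -> Prop) (z : V) :
  dense ip P -> (forall x, P x -> ip x z = 0) -> z = 0.
Proof.
move=> P_dense z_orth; apply: hnorm_eq0; apply/le_anti; rewrite hnorm_ge0 andbT.
by apply: (hnorm_le_of_dense P_dense (lexx 0)) => x Px; rewrite z_orth // normr0 mul0r.
Qed.

End InnerProduct.

Section Riesz.
Variables (R : realType) (V : lmodType R) (ip : V -> V -> R).
Hypotheses (ip_inner : is_inner_product ip) (ip_complete : is_complete ip).
Variables (P : V -> Prop) (phi : V -> R) (C : R).
Hypotheses (P0 : P 0) (P_lin : forall a u v, P u -> P v -> P (a *: u + v)).
Hypothesis phi_lin : forall a u v, P u -> P v -> phi (a *: u + v) = a * phi u + phi v.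
Hypothesis phi_bounded : forall x, P x -> `|phi x| <= C * hnorm ip x.

Let PD u v : P u -> P v -> P (u + v).
Proof. by move=> Pu Pv; have := P_lin 1 Pu Pv; rewrite scale1r. Qed.
Let PZ a u : P u -> P (a *: u).
Proof. by move=> Pu; rewrite -[a *: u]addr0; apply: P_lin. Qed.
Let phiD u v : P u -> P v -> phi (u + v) = phi u + phi v.
Proof. by move=> Pu Pv; have := phi_lin 1 Pu Pv; rewrite scale1r mul1r. Qed.
Let phiZ a u : P u -> phi (a *: u) = a * phi u.
Proof.
move=> Pu; have phi0 : phi 0 = 0.
  have := phi_lin 1 P0 P0; rewrite scale1r addr0 mul1r => phi0_twice.
  by apply: (addrI (phi 0)); rewrite addr0 -phi0_twice.
by rewrite -[a *: u]addr0 phi_lin // phi0 addr0.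
Qed.

(* The representer is the limit of a minimizing sequence of this energy; it lies in the
   closure of P, not necessarily in P. *)
Definition riesz_energy x := ip x x - 2 * phi x.
Definition riesz_energy_inf := inf [set riesz_energy x | x in P].

Local Notation J := riesz_energy.
Local Notation m := riesz_energy_inf.

Lemma riesz_energy_ge x : P x -> - C ^+ 2 <= J x.
Proof.
move=> Px; have := phi_bounded Px; have := ler_norm (phi x); have := hnorm_ge0 ip x.
have := sqr_ge0 (hnorm ip x - C); rewrite /J -(hnorm_sqr ip_inner); nra.
Qed.

Let energies_has_inf : has_inf [set J x | x in P].
Proof.
split; first by exists (J 0), 0.
by exists (- C ^+ 2) => _ [x Px <-]; apply: riesz_energy_ge.
Qed.

Lemma riesz_energy_inf_le x : P x -> m <= J x.
Proof. by move=> Px; apply: (ge_inf (proj2 energies_has_inf)); exists x. Qed.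

Lemma riesz_energy_inf_adherent e : 0 < e -> exists x, P x /\ J x < m + e.
Proof. by move=> e_gt0; have [_ [x Px <-] ?] := inf_adherent e_gt0 energies_has_inf; exists x. Qed.

Lemma riesz_energy_shift t x y : P x -> P y ->
  J (t *: y + x) = J x + 2 * t * (ip x y - phi y) + t ^+ 2 * ip y y.
Proof.
move=> Px Py; rewrite /J phi_lin // -[x in t *: y + x]scale1r.
by rewrite ip_combination // (ipC ip_inner y x); ring.
Qed.

Lemma riesz_energy_parallelogram x y : P x -> P y ->
  J x + J y = 2 * J ((1/2) *: (x + y)) + (1/2) * ip (x - y) (x - y).
Proof.
move=> Px Py; rewrite /J (phiZ _ (PD Px Py)) phiD // scalerDr.
have -> : x - y = 1 *: x + (-1) *: y by rewrite scale1r scaleN1r.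
by rewrite !ip_combination //; field.
Qed.

(* near-minimizers are close, since their midpoint has energy at least m *)
Lemma riesz_near_minimizers_close a b x y : P x -> P y ->
  J x < m + a ^+ 2 -> J y < m + b ^+ 2 -> ip (x - y) (x - y) < 2 * (a ^+ 2 + b ^+ 2).
Proof.
move=> Px Py Jx Jy; have := riesz_energy_parallelogram Px Py.
have := riesz_energy_inf_le (PZ (1/2) (PD Px Py)); lra.
Qed.

(* perturbing x by +-e y cannot push the energy below m *)
Lemma riesz_near_minimizer_euler e x y : 0 < e -> P x -> J x < m + e ^+ 2 -> P y ->
  `|ip x y - phi y| <= e * (1 + ip y y).
Proof.
move=> e_gt0 Px Jx Py.
have := riesz_energy_inf_le (P_lin e Py Px).
have := riesz_energy_inf_le (P_lin (- e) Py Px).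
rewrite !riesz_energy_shift //; have := ip_ge0 ip_inner y.
by rewrite ler_norml; move=> *; apply/andP; split; nra.
Qed.

Lemma riesz_subspace : exists w, forall x, P x -> phi x = ip x w.
Proof.
pose s n : R := 1 / n.+1%:R.
have s_gt0 n : 0 < s n by rewrite divr_gt0 ?ltr0n.
have [xs xsP] := choice (fun n => riesz_energy_inf_adherent (exprn_gt0 2 (s_gt0 n))).
have xs_cauchy : seq_cauchy ip xs.
  move=> e e_gt0; have [N s_small] : exists N, forall n, (N <= n)%N -> s n < e / 2.
    by apply: eventually_inv_succ_lt; lra.
  exists N => k n leNk leNn.
  have [[Pn Jn] [Pk Jk]] := (xsP n, xsP k).
  have := riesz_near_minimizers_close Pn Pk Jn Jk; rewrite -(hnorm_sqr ip_inner).
  have := s_small n leNn; have := s_small k leNk; have := s_gt0 n; have := s_gt0 k.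
  move=> *; rewrite -(ltr_pXn2r (_ : (0 < 2)%N)) ?nnegrE ?hnorm_ge0 ?ltW //; nra.
have [w xs_cvg] := ip_complete xs_cauchy.
exists w => y Py; apply/esym/eqP; rewrite ipC // -subr_eq0 -normr_le0.
apply/ler_addgt0Pl => e e_gt0; rewrite addr0.
have y1_gt0 : 0 < hnorm ip y + 1 by have := hnorm_ge0 ip y; lra.
have yy1_gt0 : 0 < 1 + ip y y by have := ip_ge0 ip_inner y; lra.
have e2_gt0 : 0 < e / 2 by lra.
have [N1 xs_close] := xs_cvg _ (divr_gt0 e2_gt0 y1_gt0).
have [N2 s_small] := eventually_inv_succ_lt (divr_gt0 e2_gt0 yy1_gt0).
pose n := maxn N1 N2; have [Pn Jn] := xsP n.
have := xs_close n (leq_maxl _ _); have := s_small n (leq_maxr _ _).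
rewrite !ltr_pdivlMr // -/(s n) => s_lt close_lt.
have := riesz_near_minimizer_euler (s_gt0 n) Pn Jn Py.
have := cauchy_schwarz ip_inner (w - xs n) y; rewrite (hnormBC ip_inner) => cs.
have -> : ip w y - phi y = ip (w - xs n) y + (ip (xs n) y - phi y) by rewrite ipBl // addrA subrK.
move=> euler; apply: (le_trans (ler_normD _ _)).
have := hnorm_ge0 ip y; have := hnorm_ge0 ip (xs n - w); nra.
Qed.

End Riesz.

Section CoerciveOperator.
Variables (R : realType) (V : lmodType R) (ip : V -> V -> R).
Hypothesis ip_inner : is_inner_product ip.
Variables (D : V -> Prop) (A : V -> V) (omega : R).
Hypotheses (A_lin : linear_op D A) (omega_gt0 : 0 < omega).
Hypothesis A_coercive : bounded_below ip D A omega.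

Lemma linear_op0 : A 0 = 0.
Proof.
case: A_lin => D0 _ AL; have := AL 1 0 0 D0 D0; rewrite !scale1r addr0 => A0_twice.
by apply: (addrI (A 0)); rewrite addr0 -A0_twice.
Qed.

Lemma linear_opB x y : D x -> D y -> D (x - y) /\ A (x - y) = A x - A y.
Proof.
case: A_lin => _ DL AL Dx Dy; rewrite -[x - y]addrC -scaleN1r.
by split; [apply: DL | rewrite AL // scaleN1r addrC].
Qed.

Lemma bounded_below_hnorm x : D x -> omega * hnorm ip x <= hnorm ip (A x).
Proof.
move=> Dx; have [x0|x_neq0] := eqVneq (hnorm ip x) 0; first by rewrite x0 mulr0 hnorm_ge0.
have x_gt0 : 0 < hnorm ip x by rewrite lt_neqAle eq_sym x_neq0 hnorm_ge0.
rewrite -(ler_pM2r x_gt0) -mulrA -expr2.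
apply: le_trans (A_coercive Dx) _; apply: le_trans (ler_norm _) _.
exact: (cauchy_schwarz ip_inner (A x) x).
Qed.

Lemma bounded_below_inj x y : D x -> D y -> A x = A y -> x = y.
Proof.
move=> Dx Dy Axy; have [Dxy] := linear_opB Dx Dy; rewrite Axy subrr => Axy0.
have := bounded_below_hnorm Dxy; rewrite Axy0 (hnorm0 ip_inner) => le0.
apply/eqP; rewrite -subr_eq0; apply/eqP/(hnorm_eq0 ip_inner).
by apply/le_anti; rewrite hnorm_ge0 andbT -(pmulr_rle0 _ omega_gt0).
Qed.

(* Riesz applied to A x |-> <x, f> yields w with <A x, w> = <x, f> on D: then w lies in
   the adjoint domain, i.e. in D, and A w = f. *)
Lemma self_adjoint_bounded_below_surj : is_complete ip -> dense ip D ->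
  self_adjoint ip D A -> forall f, exists u, D u /\ A u = f.
Proof.
move=> ip_complete D_dense [D_adjoint A_sym] f; have [D0 DL AL] := A_lin.
pose range y := exists2 x, D x & A x = y.
pose preim y := if pselect (range y) is left h then projT1 (cid2 h) else 0.
have preimK x : D x -> preim (A x) = x.
  move=> Dx; rewrite /preim; case: pselect => [h|]; last by case; exists x.
  by case: (cid2 h) => x' /= Dx' /bounded_below_inj; apply.
have [||||w w_repr] := @riesz_subspace _ _ ip ip_inner ip_complete range
    (fun y => ip (preim y) f) (hnorm ip f / omega).
- by exists 0; rewrite ?linear_op0.
- by move=> a _ _ [x Dx <-] [x' Dx' <-]; exists (a *: x + x'); [exact: DL | rewrite AL].
- move=> a _ _ [x Dx <-] [x' Dx' <-].
  by rewrite -AL // !preimK ?(ipDZl ip_inner) //; apply: DL.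
- move=> _ [x Dx <-]; rewrite preimK //; apply: le_trans (cauchy_schwarz ip_inner _ _) _.
  rewrite mulrC mulrAC ler_pdivlMr // -mulrA ler_wpM2l ?hnorm_ge0 // mulrC.
  exact: bounded_below_hnorm.
have w_adj x : D x -> ip (A x) w = ip x f.
  by move=> Dx; rewrite -w_repr ?preimK //; exists x.
have Dw : D w by apply/D_adjoint; exists f.
exists w; split => //; apply/eqP; rewrite -subr_eq0; apply/eqP.
apply: (orthogonal_dense_eq0 ip_inner D_dense) => x Dx.
by rewrite ipBr // -A_sym // w_adj // subrr.
Qed.

End CoerciveOperator.

Section RelativeBoundedness.
Variables (R : realType) (V : lmodType R) (ip : V -> V -> R).

Definition rel_bounded (DS : V -> Prop) (S : V -> V) (D2 : V -> Prop) (A2 : V -> V) :=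
  (forall u, D2 u -> DS u) /\
  exists c : R, 0 < c /\ forall u, D2 u -> hnorm ip (S u) <= c * hnorm ip (A2 u).

Definition form_bounded (D1 : V -> Prop) (A1 : V -> V) (D2 : V -> Prop) (A2 : V -> V) :=
  exists c : R, 0 < c /\ forall u v, D1 u -> D2 v ->
    `|ip (A1 u) v| <= c * hnorm ip (A2 v) * Num.sqrt (ip (A1 u) u).

Variables (DS : V -> Prop) (S : V -> V) (D2 : V -> Prop) (A2 : V -> V).
Hypotheses (S_lin : linear_op DS S) (A2_lin : linear_op D2 A2).
Hypothesis A2_inj : forall x y, D2 x -> D2 y -> A2 x = A2 y -> x = y.
Hypothesis A2_onto : forall f, exists u, D2 u /\ A2 u = f.

Lemma rel_bounded_comp_inv_bounded :
  rel_bounded DS S D2 A2 -> is_bounded_linear_graph ip (comp_inv_graph DS S D2 A2).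
Proof.
move=> [D2_DS [c [_ S_le]]]; have [inv invP] := choice A2_onto.
have [_ D2L A2L] := A2_lin; have [_ _ SL] := S_lin.
have invE u : D2 u -> inv (A2 u) = u.
  by move=> D2u; have [D2i A2i] := invP (A2 u); apply: A2_inj D2i D2u A2i.
exists (S \o inv); split => [a f g /=||f g].
- have [[D2f A2f] [D2g A2g]] := (invP f, invP g); have [D2h A2h] := invP (a *: f + g).
  have -> : inv (a *: f + g) = a *: inv f + inv g.
    by apply: A2_inj D2h (D2L a _ _ D2f D2g) _; rewrite A2h A2L // A2f A2g.
  by rewrite SL //; apply: D2_DS.
- by exists c => f; have [D2f A2f] := invP f; rewrite -{2}A2f; apply: S_le.
- split=> [[u [D2u <- _ <-]]|->]; first by rewrite /= invE.
  by have [D2f A2f] := invP f; exists (inv f); split => //; apply: D2_DS.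
Qed.

Lemma comp_inv_bounded_rel_bounded :
  is_bounded_linear_graph ip (comp_inv_graph DS S D2 A2) -> rel_bounded DS S D2 A2.
Proof.
move=> [T [_ [c T_le] graphT]].
have S_eq u : D2 u -> DS u /\ S u = T (A2 u).
  move=> D2u; have [u' [D2u' A2u' DSu' <-]] := (graphT (A2 u) (T (A2 u))).2 erefl.
  by rewrite -(A2_inj D2u' D2u A2u').
split=> [u /S_eq []//|]; exists (`|c| + 1); split=> [|u D2u].
  by rewrite ltr_pwDr ?normr_ge0.
rewrite (S_eq u D2u).2; apply: le_trans (T_le _) _.
by rewrite ler_wpM2r ?hnorm_ge0 // (le_trans (ler_norm _)) // lerDl.
Qed.

End RelativeBoundedness.

Section SquareRoot.
Variables (R : realType) (V : lmodType R) (ip : V -> V -> R).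
Hypothesis ip_inner : is_inner_product ip.
Variables (D1 : V -> Prop) (A1 : V -> V) (DS : V -> Prop) (S : V -> V).
Hypothesis S_sqrt : is_sqrt_op ip DS S D1 A1.

Lemma sqrt_op_ip u v : D1 u -> DS v -> ip (A1 u) v = ip (S u) (S v).
Proof.
case: S_sqrt => [[_ _ [_ S_sym] _] [D1E SSE]] D1u DSv.
by have [DSu DSSu] := (D1E u).1 D1u; rewrite -SSE // S_sym.
Qed.

Lemma sqrt_op_form u : D1 u -> Num.sqrt (ip (A1 u) u) = hnorm ip (S u).
Proof. by move=> D1u; rewrite sqrt_op_ip //; case: S_sqrt => _ [/(_ u) D1E _]; case/D1E: D1u. Qed.

Lemma sqrt_op_onto : (forall f, exists u, D1 u /\ A1 u = f) ->
  forall y, DS y -> exists2 u, D1 u & S u = y.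
Proof.
case: S_sqrt => _ [D1E SSE] A1_onto y DSy; have [u [D1u A1u]] := A1_onto y.
have [DSu DSSu] := (D1E u).1 D1u.
by exists (S u); rewrite ?SSE //; apply/D1E; rewrite SSE ?A1u.
Qed.

Variables (D2 : V -> Prop) (A2 : V -> V).

Lemma rel_bounded_form_bounded : rel_bounded ip DS S D2 A2 -> form_bounded ip D1 A1 D2 A2.
Proof.
move=> [D2_DS [c [c_gt0 S_le]]]; exists c; split=> // u v D1u D2v.
rewrite sqrt_op_ip ?sqrt_op_form //; last exact: D2_DS.
apply: le_trans (cauchy_schwarz ip_inner _ _) _.
by rewrite mulrC ler_wpM2r ?hnorm_ge0 ?S_le.
Qed.

Lemma form_bounded_rel_bounded : is_complete ip ->
  (forall f, exists u, D1 u /\ A1 u = f) ->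
  form_bounded ip D1 A1 D2 A2 -> rel_bounded ip DS S D2 A2.
Proof.
move=> ip_complete A1_onto [c [c_gt0 form_le]].
have [[[DS0 DSL SL] DS_dense [DS_adjoint S_sym] _] _] := S_sqrt.
have S_bound v : D2 v -> forall y, DS y -> `|ip (S y) v| <= c * hnorm ip (A2 v) * hnorm ip y.
  move=> D2v y /(sqrt_op_onto A1_onto) [u D1u <-].
  have [[_ _ _ _] [/(_ u) [/(_ D1u) [_ DSSu] _] SSE]] := S_sqrt.
  by rewrite -sqrt_op_form // SSE //; apply: form_le.
have D2_DS v : D2 v -> DS v.
  move=> D2v; apply/DS_adjoint.
  have [|w w_repr] := riesz_subspace ip_inner ip_complete DS0 DSL _ (S_bound v D2v).
    by move=> a y z DSy DSz; rewrite SL // ipDZl.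
  by exists w.
split=> //; exists c; split=> // v D2v.
have c_ge0 : 0 <= c * hnorm ip (A2 v) by rewrite mulr_ge0 ?hnorm_ge0 ?ltW.
apply: (hnorm_le_of_dense ip_inner DS_dense c_ge0) => y DSy.
by rewrite -S_sym //; [exact: S_bound | exact: D2_DS].
Qed.

End SquareRoot.

Theorem lemma3p1 (R : realType) (V : lmodType R) (ip : V -> V -> R)
  (D1 : V -> Prop) (A1 : V -> V) (D2 : V -> Prop) (A2 : V -> V)
  (DS : V -> Prop) (S : V -> V) (omega1 omega2 : R) :
  is_hilbert ip ->
  linear_op D1 A1 -> dense ip D1 -> closed_op ip D1 A1 -> self_adjoint ip D1 A1 ->
  linear_op D2 A2 -> dense ip D2 -> closed_op ip D2 A2 -> self_adjoint ip D2 A2 ->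
  0 < omega1 -> bounded_below ip D1 A1 omega1 ->
  0 < omega2 -> bounded_below ip D2 A2 omega2 ->
  is_sqrt_op ip DS S D1 A1 ->
  let a := (forall u, D2 u -> DS u) /\
           (exists c : R, 0 < c /\ forall u, D2 u -> hnorm ip (S u) <= c * hnorm ip (A2 u)) in
  let b := is_bounded_linear_graph ip (comp_inv_graph DS S D2 A2) in
  let c := exists c : R, 0 < c /\ forall u v, D1 u -> D2 v ->
             `|ip (A1 u) v| <= c * hnorm ip (A2 v) * Num.sqrt (ip (A1 u) u) in
  (a <-> b) /\ (b <-> c).
Proof.
move=> [ip_inner ip_complete] A1_lin A1_dense _ A1_sa A2_lin A2_dense _ A2_sa
  omega1_gt0 A1_coercive omega2_gt0 A2_coercive S_sqrt; cbv zeta.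
have S_lin : linear_op DS S by case: S_sqrt => [[]].
have A1_onto := self_adjoint_bounded_below_surj ip_inner A1_lin omega1_gt0 A1_coercive
  ip_complete A1_dense A1_sa.
have A2_onto := self_adjoint_bounded_below_surj ip_inner A2_lin omega2_gt0 A2_coercive
  ip_complete A2_dense A2_sa.
have A2_inj := bounded_below_inj ip_inner A2_lin omega2_gt0 A2_coercive.
have ab := rel_bounded_comp_inv_bounded S_lin A2_lin A2_inj A2_onto.
have ba := comp_inv_bounded_rel_bounded A2_inj.
have ac := rel_bounded_form_bounded ip_inner S_sqrt (D2:=D2) (A2:=A2).
have ca := form_bounded_rel_bounded ip_inner S_sqrt ip_complete A1_onto.
by split; split; [exact: ab | exact: ba | move/ba/ac | move/ca/ab].
Qed.
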